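(* Let $n\ge1$. (1) The number of plane trees with $n$ edges having exactly one old leaf is $2^{n-1}$. (2) The number of plane trees with $n$ edges having no young leaves is the Motzkin number $M_{n-1}$.
   Context: A plane tree is a rooted tree in which the children of each vertex are linearly ordered (left to right). A leaf is a vertex with no children; by convention the tree consisting of a single vertex (no edges) has no leaves. A leaf is an old leaf if it is the leftmost child of its parent, and a young leaf otherwise. The Motzkin number $M_m$ is the number of lattice paths from $(0,0)$ to $(m,0)$ with steps $(1,1),(1,-1),(1,0)$ never going below the $x$-axis; equivalently $M_m=\sum_{r}\binom{m}{2r}\frac{1}{r+1}\binom{2r}{r}$. *)

From mathcomp Require Import all_boot.
From Stdlib Require List.
Set Implicit Arguments. Unset Strict Implicit. Unset Printing Implicit Defensive.

Inductive ptree : Type := Node of seq ptree.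

Definition children (t : ptree) : seq ptree := let: Node ts := t in ts.

(* number of edges = number of non-root vertices *)
Fixpoint edges (t : ptree) : nat :=
  let: Node ts := t in sumn (map (fun c => (edges c).+1) ts).

Definition is_leaf_child (c : ptree) : bool := nilp (children c).

(* Leaves are non-root vertices with no children (so the one-vertex tree
   has no leaves).  An old leaf is a leaf that is the leftmost child of its
   parent; a young leaf is a leaf that is not the leftmost child. *)
Fixpoint old_leaves (t : ptree) : nat :=
  let: Node ts := t in
  (if ts is c :: _ then nat_of_bool (is_leaf_child c) else 0)
  + sumn (map old_leaves ts).

Fixpoint young_leaves (t : ptree) : nat :=
  let: Node ts := t in
  (if ts is _ :: r then count is_leaf_child r else 0)
  + sumn (map young_leaves ts).

Definition card_is (P : ptree -> Prop) (k : nat) : Prop :=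
  exists s : seq ptree,
    List.NoDup s /\ (forall t, List.In t s <-> P t) /\ size s = k.

Definition motzkin (m : nat) : nat :=
  \sum_(r < m.+1) 'C(m, 2 * r) * ('C(2 * r, r) %/ r.+1).

(* Old leaves: a tree with m + 2 edges and exactly one old leaf arises in exactly
   one way from such a tree with m + 1 edges, either by giving the root a new last
   child that is a leaf, or by planting the tree under a new root; hence the count
   doubles at each step.

   Young leaves: removing the last subtree c of the root of a tree without young
   leaves leaves either a bare root (the tree is c planted under a new root) or a
   smaller tree without young leaves, and c is then itself such a tree and not a
   leaf.  This is the first-return decomposition of Motzkin paths (a flat step, or
   Up w1 Down w2), so both families come out of one recursive generator and are
   equinumerous.  A Motzkin path of length m with r up-steps is a choice of the 2r
   positions of its non-flat steps together with a Dyck path of length 2r, and the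
   Dyck paths are counted by the ballot recurrence, which gives C(m, 2r) Cat_r. *)

From HB Require Import structures.
From mathcomp Require Import all_boot zify.
From Stdlib Require List.
Set Implicit Arguments. Unset Strict Implicit. Unset Printing Implicit Defensive.

Fixpoint ptree_enc (t : ptree) : GenTree.tree unit :=
  let: Node ts := t in GenTree.Node 0 (map ptree_enc ts).

Fixpoint ptree_dec (c : GenTree.tree unit) : ptree :=
  if c is GenTree.Node _ cs then Node (map ptree_dec cs) else Node [::].

Fixpoint ptree_encK (t : ptree) : ptree_dec (ptree_enc t) = t :=
  let: Node ts := t in
  congr1 Node ((fix loop ts : map ptree_dec (map ptree_enc ts) = ts :=
                  if ts is t :: ts' return map ptree_dec (map ptree_enc ts) = ts
                  then f_equal2 cons (ptree_encK t) (loop ts') else erefl) ts).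

HB.instance Definition _ := Equality.copy ptree (can_type ptree_encK).

Lemma In_mem (T : eqType) (x : T) (s : seq T) : List.In x s <-> x \in s.
Proof.
elim: s => [|y s IHs] //=; rewrite in_cons IHs.
by split=> [[->|->]|/orP[/eqP->|->]]; rewrite ?eqxx ?orbT; auto.
Qed.

Lemma uniq_NoDup (T : eqType) (s : seq T) : uniq s -> List.NoDup s.
Proof.
elim: s => [|x s IHs] /=; first by constructor.
by case/andP=> /negP sx /IHs; constructor => // /In_mem.
Qed.

Lemma card_is_uniq (P : ptree -> Prop) (s : seq ptree) :
  uniq s -> (forall t, t \in s <-> P t) -> card_is P (size s).
Proof.
move=> s_uniq memP; exists s; split; first exact: uniq_NoDup.
by split=> // t; apply: iff_trans (memP t); exact: In_mem.
Qed.

Lemma uniq_flatten_map (I T : eqType) (F : I -> seq T) (s : seq I) :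
  uniq s -> {in s, forall i, uniq (F i)} ->
  (forall i j x, x \in F i -> x \in F j -> i = j) -> uniq (flatten (map F s)).
Proof.
elim: s => //= i s IHs /andP[i_notin_s s_uniq] F_uniq F_disj.
rewrite cat_uniq F_uniq ?mem_head // IHs // => [|j js]; last exact/F_uniq/mem_behead.
rewrite andbT; apply/hasPn => x /flatten_mapP[j js xj]; apply/negP => xi.
by move: i_notin_s; rewrite (F_disj _ _ _ xi xj) js.
Qed.

Notation leaf := (Node [::]).

Definition plant t := Node [:: t].
Definition add_child t c := Node (rcons (children t) c).
Definition add_leaf t := add_child t leaf.

Lemma Node_children t : Node (children t) = t.
Proof. by case: t. Qed.

Lemma Node_eq_leaf ts : (Node ts == leaf) = (ts == [::]).
Proof. by apply/eqP/eqP => [[]|->]. Qed.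

Lemma is_leaf_childE t : is_leaf_child t = (t == leaf).
Proof. by case: t => -[|c ts] //=; apply/esym/eqP. Qed.

Lemma edges_eq0 t : (edges t == 0) = (t == leaf).
Proof. by case: t => -[|c ts] //=; rewrite addSn; apply/esym/eqP. Qed.

Lemma plant_inj : injective plant.
Proof. by move=> t u []. Qed.

Lemma add_child_inj t c t' c' : add_child t c = add_child t' c' -> t = t' /\ c = c'.
Proof. by case=> /rcons_inj[/(congr1 Node)]; rewrite !Node_children. Qed.

Lemma add_leaf_inj : injective add_leaf.
Proof. by move=> t t' /add_child_inj[]. Qed.

Lemma plant_neq_add_child t c u : t != leaf -> plant u <> add_child t c.
Proof.
rewrite -[t in t != leaf]Node_children Node_eq_leaf => nlt [/(congr1 size)].
by rewrite size_rcons; case: (children t) nlt.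
Qed.

Lemma plantVadd_child t : t != leaf ->
  (exists c, t = plant c) \/ (exists u c, u != leaf /\ t = add_child u c).
Proof.
case: t => ts; rewrite Node_eq_leaf; case/lastP: ts => [//|[|t ts] c] _; first by left; exists c.
by right; exists (Node (t :: ts)), c; rewrite Node_eq_leaf.
Qed.

Lemma edges_plant t : edges (plant t) = (edges t).+1.
Proof. by rewrite /= addn0. Qed.

Lemma edges_add_child t c : edges (add_child t c) = edges t + (edges c).+1.
Proof. by case: t => ts; rewrite /add_child /= -cats1 map_cat sumn_cat /= addn0. Qed.

Lemma old_leaves_plant t : t != leaf -> old_leaves (plant t) = old_leaves t.
Proof. by rewrite /= -is_leaf_childE addn0 => /negbTE->. Qed.

Lemma old_leaves_add_child t c : t != leaf ->
  old_leaves (add_child t c) = old_leaves t + old_leaves c.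
Proof. by case: t => -[|t ts] // _; rewrite /add_child /= -cats1 map_cat sumn_cat /=; lia. Qed.

Lemma young_leaves_plant t : young_leaves (plant t) = young_leaves t.
Proof. by rewrite /= addn0. Qed.

Lemma young_leaves_add_child t c : t != leaf ->
  young_leaves (add_child t c) = young_leaves t + (c == leaf) + young_leaves c.
Proof.
case: t => -[|t ts] // _; rewrite /add_child /= -cats1 count_cat map_cat sumn_cat /=.
by rewrite is_leaf_childE; lia.
Qed.

Lemma edges_eq1 t : edges t = 1 -> t = plant leaf.
Proof.
case: t => -[|c [|c' ts]] //=; last by lia.
by rewrite addn0 => -[/eqP]; rewrite edges_eq0 => /eqP->.
Qed.

Lemma old_leaves_gt0 t : t != leaf -> 0 < old_leaves t.
Proof.
move: t; fix IH 1 => -[[|c ts]] // _ /=.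
case: (eqVneq c leaf) => [-> //|/IH]; lia.
Qed.

(** * Trees with one old leaf *)

(* Trees are indexed by their number of edges minus one, here and below. *)
Fixpoint one_old_leaf_trees m : seq ptree :=
  if m is m'.+1 then
    map add_leaf (one_old_leaf_trees m') ++ map plant (one_old_leaf_trees m')
  else [:: plant leaf].

Lemma mem_one_old_leaf_trees m t :
  (t \in one_old_leaf_trees m) = (edges t == m.+1) && (old_leaves t == 1).
Proof.
elim: m t => [|m IHm] t /=.
  by rewrite inE; apply/eqP/andP => [-> // | [/eqP/edges_eq1]].
apply/idP/andP => [|[/eqP Et /eqP Ot]].
  rewrite mem_cat => /orP[] /mapP[u]; rewrite IHm => /andP[/eqP Eu /eqP Ou] ->;
    have nlu : u != leaf by rewrite -edges_eq0 Eu.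
  - by rewrite edges_add_child old_leaves_add_child // Eu Ou addn1 !eqxx.
  - by rewrite edges_plant old_leaves_plant // Eu Ou !eqxx.
have nlt : t != leaf by rewrite -edges_eq0 Et.
rewrite mem_cat; case: (plantVadd_child nlt) => [[c Ec] | [u [c [nlu Eu]]]].
  rewrite Ec edges_plant in Et; move/succn_inj: Et => Et.
  have nlc : c != leaf by rewrite -edges_eq0 Et.
  rewrite Ec old_leaves_plant // in Ot.
  by apply/orP; right; rewrite Ec map_f // IHm Et Ot !eqxx.
rewrite Eu edges_add_child in Et; rewrite Eu old_leaves_add_child // in Ot.
have [Ec | nlc] := eqVneq c leaf; last first.
  by have := old_leaves_gt0 nlu; have := old_leaves_gt0 nlc; lia.
apply/orP; left; rewrite Eu Ec -/(add_leaf u) map_f // IHm.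
by move: Et Ot; rewrite Ec addn0 addn1 => /succn_inj -> ->; rewrite !eqxx.
Qed.

Lemma one_old_leaf_trees_uniq m : uniq (one_old_leaf_trees m).
Proof.
elim: m => //= m IHm.
rewrite cat_uniq (map_inj_uniq add_leaf_inj) (map_inj_uniq plant_inj) IHm andbT /=.
apply/hasPn => _ /mapP[u _ ->]; apply/mapP=> -[t].
rewrite mem_one_old_leaf_trees => /andP[/eqP Et _].
by apply: plant_neq_add_child; rewrite -edges_eq0 Et.
Qed.

Lemma size_one_old_leaf_trees m : size (one_old_leaf_trees m) = 2 ^ m.
Proof. by elim: m => //= m IHm; rewrite size_cat !size_map IHm expnS mul2n addnn. Qed.

(** * A generator for Motzkin families *)

Section MotzkinGenerator.

Variables (T : eqType) (base : T) (unary : T -> T) (binary : T -> T -> T).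

Fixpoint motzkin_gen_fuel (fuel m : nat) : seq T :=
  if fuel is fuel'.+1 then
    if m is m'.+1 then
      map unary (motzkin_gen_fuel fuel' m') ++
      flatten [seq [seq binary x y | x <- motzkin_gen_fuel fuel' a,
                                     y <- motzkin_gen_fuel fuel' (m' - a.+1)]
              | a <- iota 0 m']
    else [:: base]
  else [::].

(* The fuel only ensures termination; any fuel above m gives the same list. *)
Definition motzkin_gen m := motzkin_gen_fuel m.+1 m.

Lemma motzkin_gen_fuelS fuel m : motzkin_gen_fuel fuel.+1 m.+1 =
  map unary (motzkin_gen_fuel fuel m) ++
  flatten [seq [seq binary x y | x <- motzkin_gen_fuel fuel a,
                                 y <- motzkin_gen_fuel fuel (m - a.+1)]
          | a <- iota 0 m].
Proof. by []. Qed.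

Lemma motzkin_gen_fuel_enough fuel fuel' m :
  m < fuel -> m < fuel' -> motzkin_gen_fuel fuel m = motzkin_gen_fuel fuel' m.
Proof.
elim: fuel fuel' m => [|fuel IH] [|fuel'] [|m] //= lt_m lt_m'.
congr (map _ _ ++ flatten _); first exact: IH.
apply/eq_in_map => a; rewrite mem_iota => /andP[_ lt_a].
by rewrite (IH fuel' a) ?(IH fuel' (m - a.+1)) //; lia.
Qed.

Lemma motzkin_genS m : motzkin_gen m.+1 =
  map unary (motzkin_gen m) ++
  flatten [seq [seq binary x y | x <- motzkin_gen a, y <- motzkin_gen (m - a.+1)]
          | a <- iota 0 m].
Proof.
rewrite [LHS]/motzkin_gen [LHS]motzkin_gen_fuelS; congr (_ ++ flatten _).
apply/eq_in_map => a; rewrite mem_iota => /andP[_ lt_a].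
by rewrite (@motzkin_gen_fuel_enough m.+1 a.+1 a)
  ?(@motzkin_gen_fuel_enough m.+1 (m - a.+1).+1 (m - a.+1)) //; lia.
Qed.

Variable Q : nat -> T -> Prop.
Hypothesis Q_base : Q 0 base.
Hypothesis Q_unary : forall m x, Q m x -> Q m.+1 (unary x).
Hypothesis Q_binary : forall a c x y, Q a x -> Q c y -> Q (a + c).+2 (binary x y).

Lemma motzkin_gen_sound m x : x \in motzkin_gen m -> Q m x.
Proof.
elim/ltn_ind: m x => -[|m] IH x; first by rewrite inE => /eqP->.
rewrite motzkin_genS mem_cat => /orP[/mapP[y y_in ->] | /flatten_mapP[a]].
  exact/Q_unary/IH.
rewrite mem_iota => /andP[_ lt_a] /allpairsP[[y z] [/= y_in z_in ->]].
have -> : m.+1 = (a + (m - a.+1)).+2 by lia.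
by apply: Q_binary; apply: IH => //; lia.
Qed.

Hypothesis Q_base_inv : forall z, Q 0 z -> z = base.
Hypothesis Q_succ_inv : forall m z, Q m.+1 z ->
  (exists2 x, Q m x & z = unary x) \/
  (exists a c x y, [/\ (a + c).+1 = m, Q a x, Q c y & z = binary x y]).

Lemma motzkin_gen_complete m z : Q m z -> z \in motzkin_gen m.
Proof.
elim/ltn_ind: m z => -[|m] IH z; first by move/Q_base_inv->; rewrite inE.
rewrite motzkin_genS mem_cat => /Q_succ_inv[[x Qx ->] | [a [c [x [y [Em Qx Qy ->]]]]]].
  by rewrite map_f ?IH.
apply/orP; right; apply/flatten_mapP; exists a; first by rewrite mem_iota; lia.
have -> : m - a.+1 = c by lia.
by apply/allpairsP; exists (x, y); rewrite !IH //; lia.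
Qed.

Lemma mem_motzkin_gen m z : z \in motzkin_gen m <-> Q m z.
Proof. by split; [apply: motzkin_gen_sound | apply: motzkin_gen_complete]. Qed.

Hypothesis Q_size_uniq : forall a a' x, Q a x -> Q a' x -> a = a'.
Hypothesis unary_inj : injective unary.
Hypothesis binary_inj : forall a a' x y x' y', Q a x -> Q a' x' ->
  binary x y = binary x' y' -> x = x' /\ y = y'.
Hypothesis unary_neq_binary : forall a x y z, Q a x -> unary z <> binary x y.

Lemma motzkin_gen_uniq m : uniq (motzkin_gen m).
Proof.
elim/ltn_ind: m => -[|m] IH //; rewrite motzkin_genS cat_uniq map_inj_uniq ?IH //=.
apply/andP; split.
  apply/hasPn => _ /flatten_mapP[a _] /allpairsP[[x y] [/= /motzkin_gen_sound Qx _ ->]].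
  by apply/mapP=> -[z _ /esym /(unary_neq_binary Qx)].
apply: uniq_flatten_map; first exact: iota_uniq.
  move=> a; rewrite mem_iota => /andP[_ lt_a]; apply: allpairs_uniq; rewrite ?IH //; try lia.
  move=> [x y] [x' y'] /allpairsP[[? ?] [/= /motzkin_gen_sound Qx _ [-> ->]]].
  move=> /allpairsP[[? ?] [/= /motzkin_gen_sound Qx' _ [-> ->]]] /=.
  by move/(binary_inj Qx Qx') => [-> ->].
move=> a a' _ /allpairsP[[x y] [/= /motzkin_gen_sound Qx _ ->]].
move=> /allpairsP[[x' y'] [/= /motzkin_gen_sound Qx' _]] /(binary_inj Qx Qx')[xx' _].
by rewrite xx' in Qx; apply: Q_size_uniq Qx Qx'.
Qed.

End MotzkinGenerator.

Lemma size_motzkin_gen (T T' : eqType) (b : T) f1 f2 (b' : T') f1' f2' m :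
  size (motzkin_gen b f1 f2 m) = size (motzkin_gen b' f1' f2' m).
Proof.
elim/ltn_ind: m => -[|m] IH //.
rewrite !motzkin_genS !size_cat !size_map !size_flatten /shape -!map_comp IH //.
congr (_ + sumn _); apply/eq_in_map => a; rewrite mem_iota => /andP[_ lt_a] /=.
by rewrite !size_allpairs !IH //; lia.
Qed.

(** * Trees without young leaves *)

Definition no_young_leaf m t := edges t = m.+1 /\ young_leaves t = 0.

Definition no_young_leaf_trees := motzkin_gen (plant leaf) plant add_child.

Lemma no_young_leaf_nonleaf m t : no_young_leaf m t -> t != leaf.
Proof. by case=> Et _; rewrite -edges_eq0 Et. Qed.

Lemma no_young_leaf_plant m t : no_young_leaf m t -> no_young_leaf m.+1 (plant t).
Proof. by case=> Et Yt; rewrite /no_young_leaf edges_plant young_leaves_plant Et Yt. Qed.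

Lemma no_young_leaf_add_child a c t u :
  no_young_leaf a t -> no_young_leaf c u -> no_young_leaf (a + c).+2 (add_child t u).
Proof.
move=> Yt Yu; have nlt := no_young_leaf_nonleaf Yt; have nlu := no_young_leaf_nonleaf Yu.
case: Yt Yu => Et Yt [Eu Yu]; split; first by rewrite edges_add_child Et Eu; lia.
by rewrite young_leaves_add_child // Yt Yu (negbTE nlu).
Qed.

Lemma no_young_leaf_succ_inv m t : no_young_leaf m.+1 t ->
  (exists2 c, no_young_leaf m c & t = plant c) \/
  (exists a c u v, [/\ (a + c).+1 = m, no_young_leaf a u, no_young_leaf c v
                     & t = add_child u v]).
Proof.
move=> Yt; have := no_young_leaf_nonleaf Yt; case: Yt => Et Yt.
case/plantVadd_child => [[c Ec] | [u [v [nlu Eu]]]].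
  by left; exists c => //; move: Et Yt; rewrite Ec edges_plant young_leaves_plant => -[].
rewrite Eu edges_add_child in Et; rewrite Eu young_leaves_add_child // in Yt.
have nlv : v != leaf by apply/eqP => Ev; move: Yt; rewrite Ev eqxx; lia.
move: nlu nlv; rewrite -!edges_eq0 => nlu nlv.
by right; exists (edges u).-1, (edges v).-1, u, v; split=> //; [lia | split | split]; lia.
Qed.

Lemma mem_no_young_leaf_trees m t : t \in no_young_leaf_trees m <-> no_young_leaf m t.
Proof.
apply: mem_motzkin_gen => //.
- exact: no_young_leaf_plant.
- exact: no_young_leaf_add_child.
- by move=> z [Ez _]; apply: edges_eq1.
- exact: no_young_leaf_succ_inv.
Qed.

Lemma no_young_leaf_trees_uniq m : uniq (no_young_leaf_trees m).
Proof.
apply: (@motzkin_gen_uniq _ _ _ _ no_young_leaf) => //.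
- exact: no_young_leaf_plant.
- exact: no_young_leaf_add_child.
- by move=> a a' t [Et _] [Et' _]; apply: succn_inj; rewrite -Et -Et'.
- exact: plant_inj.
- by move=> a a' t u t' u' _ _ /add_child_inj.
- by move=> a t u v /no_young_leaf_nonleaf /plant_neq_add_child.
Qed.

(** * Motzkin paths *)

Inductive step := Up | Flat | Down.

Definition step_code s := match s with Up => 0 | Flat => 1 | Down => 2 end.
Definition step_decode n := match n with 0 => Up | 1 => Flat | _ => Down end.

Lemma step_codeK : cancel step_code step_decode.
Proof. by case. Qed.

HB.instance Definition _ := Equality.copy step (can_type step_codeK).

Fixpoint walk (h : nat) (w : seq step) : option nat :=
  match w with
  | [::] => Some h
  | Up :: w' => walk h.+1 w'
  | Flat :: w' => walk h w'
  | Down :: w' => if h is h'.+1 then walk h' w' else None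
  end.

Lemma walk_cat h w w' :
  walk h (w ++ w') = if walk h w is Some k then walk k w' else None.
Proof. by elim: w h => [|[] w IHw] [|h] //=. Qed.

Lemma walk_addn h k j w : walk h w = Some k -> walk (h + j) w = Some (k + j).
Proof.
elim: w h => [|[] w IHw] h /=; [by case=> <- | exact: IHw | exact: IHw |].
by case: h => // h; apply: IHw.
Qed.

Lemma walk_first_return h k w : walk h.+1 w = Some k -> k <= h ->
  exists w1 w2, [/\ w = w1 ++ Down :: w2, walk 0 w1 = Some 0 & walk h w2 = Some k].
Proof.
elim: {w}(size w).+1 {-2}w (ltnSn (size w)) h => // n IHn [|s w] /= lt_w h.
  by case=> <-; lia.
case: s => [Hw le_kh | Hw le_kh | Hw _].
- have [w1 [w2 [Ew Hw1 Hw2]]] := IHn w lt_w h.+1 Hw (leqW le_kh).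
  have [|v1 [v2 [Ew2 Hv1 Hv2]]] := IHn w2 _ h Hw2 le_kh.
    by move: lt_w; rewrite Ew size_cat /=; lia.
  exists (Up :: w1 ++ Down :: v1), v2; split=> //; first by rewrite Ew Ew2 /= -catA.
  by rewrite /= walk_cat (walk_addn 1 Hw1).
- have [w1 [w2 [-> Hw1 Hw2]]] := IHn w lt_w h Hw le_kh.
  by exists (Flat :: w1), w2.
- by exists [::], w.
Qed.

Lemma first_return_uniq w1 w2 v1 v2 :
  walk 0 w1 = Some 0 -> walk 0 v1 = Some 0 ->
  w1 ++ Down :: w2 = v1 ++ Down :: v2 -> w1 = v1 /\ w2 = v2.
Proof.
wlog le_wv : w1 w2 v1 v2 / size w1 <= size v1.
  move=> IH Hw Hv E; case: (leqP (size w1) (size v1)) => [|/ltnW] le; first exact: IH.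
  by have [-> ->] := IH v1 v2 w1 w2 le Hv Hw (esym E).
move=> Hw Hv E; have [eq_wv | neq_wv] := eqVneq (size w1) (size v1).
  by move/eqP: E; rewrite eqseq_cat // => /andP[/eqP-> /eqP[->]].
have Ev : take (size v1) (w1 ++ Down :: w2) = v1 by rewrite E take_size_cat.
move: Hv; rewrite -Ev take_cat ltnNge le_wv /= walk_cat Hw.
have : 0 < size v1 - size w1 by rewrite subn_gt0 ltn_neqAle neq_wv le_wv.
by case: (size v1 - size w1).
Qed.

Definition motzkin_path m w := size w = m /\ walk 0 w = Some 0.

Definition motzkin_paths :=
  motzkin_gen [::] (cons Flat) (fun w1 w2 => Up :: w1 ++ Down :: w2).

Lemma motzkin_path_flat m w : motzkin_path m w -> motzkin_path m.+1 (Flat :: w).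
Proof. by case=> Ew Hw; split; rewrite /= ?Ew. Qed.

Lemma motzkin_path_up_down a c w1 w2 : motzkin_path a w1 -> motzkin_path c w2 ->
  motzkin_path (a + c).+2 (Up :: w1 ++ Down :: w2).
Proof.
case=> E1 H1 [E2 H2]; split; first by rewrite /= size_cat /= E1 E2 addnS.
by rewrite /= walk_cat (walk_addn 1 H1).
Qed.

Lemma motzkin_path_succ_inv m w : motzkin_path m.+1 w ->
  (exists2 w', motzkin_path m w' & w = Flat :: w') \/
  (exists a c w1 w2, [/\ (a + c).+1 = m, motzkin_path a w1, motzkin_path c w2
                       & w = Up :: w1 ++ Down :: w2]).
Proof.
case: w => [|[] w] [//= [Ew] Hw]; last by left; exists w.
have [w1 [w2 [E H1 H2]]] := walk_first_return Hw (leqnn 0).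
right; exists (size w1), (size w2), w1, w2; rewrite E; split=> //.
by move: Ew; rewrite E size_cat /= addnS.
Qed.

Lemma mem_motzkin_paths m w : w \in motzkin_paths m <-> motzkin_path m w.
Proof.
apply: mem_motzkin_gen => //.
- exact: motzkin_path_flat.
- exact: motzkin_path_up_down.
- by move=> [] // ? ? [].
- exact: motzkin_path_succ_inv.
Qed.

Lemma motzkin_paths_uniq m : uniq (motzkin_paths m).
Proof.
apply: (@motzkin_gen_uniq _ _ _ _ motzkin_path) => //.
- exact: motzkin_path_flat.
- exact: motzkin_path_up_down.
- by move=> a a' w [<- _] [<- _].
- by move=> w w' [].
- by move=> a a' w1 w2 w1' w2' [_ H1] [_ H1'] [/(first_return_uniq H1 H1')].
Qed.

(** * Counting Motzkin paths *)

Fixpoint words m : seq (seq step) :=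
  if m is m'.+1 then [seq s :: w | s <- [:: Flat; Up; Down], w <- words m'] else [:: [::]].

Lemma mem_words m w : (w \in words m) = (size w == m).
Proof.
elim: m w => [|m IHm] w; first by case: w.
apply/allpairsP/idP => [[[s v] [_ /= ? ->]] | ]; first by rewrite /= eqSS -IHm.
by case: w => // s w; rewrite /= eqSS -IHm => ?; exists (s, w); case: s.
Qed.

Lemma words_uniq m : uniq (words m).
Proof. by elim: m => // m IHm; apply: allpairs_uniq => // -[? ?] [? ?] _ _ [-> ->]. Qed.

Definition walks m h u :=
  [seq w <- words m | (walk h w == Some 0) && (count_mem Up w == u)].

Lemma mem_walks m h u w :
  (w \in walks m h u) = [&& size w == m, walk h w == Some 0 & count_mem Up w == u].
Proof. by rewrite mem_filter mem_words andbC. Qed.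

Lemma walks_uniq m h u : uniq (walks m h u).
Proof. exact/filter_uniq/words_uniq. Qed.

Lemma size_walksS m h u : size (walks m.+1 h u) = size (walks m h u) +
  (if u is u'.+1 then size (walks m h.+1 u') else 0) +
  (if h is h'.+1 then size (walks m h' u) else 0).
Proof.
rewrite size_filter /= !count_cat !count_map addn0 addnA.
congr (_ + _ + _); first by rewrite size_filter; apply: eq_count => w /=; rewrite add0n.
  case: u => [|u]; last by rewrite size_filter; apply: eq_count => w /=; rewrite add1n eqSS.
  by rewrite -[RHS](count_pred0 (words m)); apply: eq_count => w /=; rewrite add1n andbF.
case: h => [|h]; last by rewrite size_filter; apply: eq_count => w /=; rewrite add0n.
by rewrite -[RHS](count_pred0 (words m)); apply: eq_count.
Qed.

Lemma size_walks_small m h u : m < u.*2 + h -> size (walks m h u) = 0.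
Proof.
elim: m h u => [|m IHm] h u lt_m; first by case: h u lt_m => [|h] [|u].
rewrite size_walksS IHm; last lia.
by case: u lt_m => [|u] lt_m; case: h lt_m => [|h] lt_m /=; rewrite ?IHm //; lia.
Qed.

(* A walk of length u.*2 + h from h down to 0 with u up-steps has no flat step:
   these are the ballot paths. *)
Definition ballot h u := size (walks (u.*2 + h) h u).

Lemma ballot_rec h u : 0 < u.*2 + h -> ballot h u =
  (if u is u'.+1 then ballot h.+1 u' else 0) + (if h is h'.+1 then ballot h' u else 0).
Proof.
rewrite /ballot; case Ek: (u.*2 + h) => [//|k] _; rewrite size_walksS size_walks_small; last lia.
by case: u Ek => [|u] Ek; case: h Ek => [|h] Ek //=; congr (_ + _);
  congr (size (walks _ _ _)); lia.
Qed.

Lemma size_walks m h u : size (walks m h u) = 'C(m, u.*2 + h) * ballot h u.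
Proof.
elim: m h u => [|m IHm] h u; first by rewrite bin0n; case: h u => [|h] [|u].
rewrite size_walksS; case: u => [|u]; case: h => [|h]; rewrite !IHm ?bin0 //.
- by rewrite [ballot h.+1 0]ballot_rec // double0 !add0n addn0 binS; lia.
- by rewrite [ballot 0 u.+1]ballot_rec // !addn0 doubleS addn1 binS; lia.
- by rewrite [ballot h.+1 u.+1]ballot_rec // doubleS !addnS !addSn binS; lia.
Qed.

Lemma ballot_h0 h : ballot h 0 = 1.
Proof. by elim: h => // h IHh; rewrite ballot_rec. Qed.

Lemma ballot_binS u h : ballot h u.+1 + 'C(u.+1.*2 + h, u) = 'C(u.+1.*2 + h, u.+1).
Proof.
elim: u h => [|u IHu] h; elim: h => [|h IHh] //.
- by move: IHh; rewrite [ballot h.+1 1]ballot_rec // ballot_h0 !bin0 !bin1; lia.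
- have sym : 'C(u.*2.+3, u.+2) = 'C(u.*2.+3, u.+1).
    by rewrite -(@bin_sub _ u.+1); [congr 'C(_, _) | ]; lia.
  move: (IHu 1); rewrite [ballot 0 u.+2]ballot_rec // !doubleS !addn0 !addn1.
  by rewrite (binS u.*2.+3 u) (binS u.*2.+3 u.+1) sym; lia.
- move: (IHu h.+2) IHh; rewrite [ballot h.+1 u.+2]ballot_rec // !doubleS !addnS !addSn.
  by rewrite (binS (u.*2 + h).+4 u) (binS (u.*2 + h).+4 u.+1); lia.
Qed.

Lemma ballot_catalan r : ballot 0 r = 'C(r.*2, r) %/ r.+1.
Proof.
case: r => [//|r]; have := ballot_binS r 0; have := mul_bin_left r.+1.*2 r.
rewrite addn0 (_ : r.+1.*2 - r = r.+2); last lia.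
move=> left_bin binS_r; rewrite (_ : 'C(_, _) = r.+2 * ballot 0 r.+1) ?mulKn //; nia.
Qed.

Definition motzkin_words m := flatten [seq walks m 0 u | u <- iota 0 m.+1].

Lemma mem_motzkin_words m w :
  (w \in motzkin_words m) = (size w == m) && (walk 0 w == Some 0).
Proof.
apply/flatten_mapP/andP => [[u _] | [/eqP Ew Hw]].
  by rewrite mem_walks => /and3P[-> -> _].
exists (count_mem Up w); last by rewrite mem_walks Ew Hw !eqxx.
by rewrite mem_iota ltnS -Ew count_size.
Qed.

Lemma motzkin_words_uniq m : uniq (motzkin_words m).
Proof.
apply: uniq_flatten_map => [|u _|u v w]; rewrite ?iota_uniq ?walks_uniq //.
by rewrite !mem_walks => /and3P[_ _ /eqP<-] /and3P[_ _ /eqP<-].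
Qed.

Lemma size_motzkin_words m : size (motzkin_words m) = motzkin m.
Proof.
rewrite size_flatten sumnE /shape !big_map -[iota 0 m.+1]/(index_iota 0 m.+1) big_mkord.
by apply: eq_bigr => r _; rewrite size_walks addn0 ballot_catalan mul2n.
Qed.

Lemma size_motzkin_paths m : size (motzkin_paths m) = motzkin m.
Proof.
rewrite -size_motzkin_words; apply/perm_size/uniq_perm.
- exact: motzkin_paths_uniq.
- exact: motzkin_words_uniq.
- move=> w; rewrite mem_motzkin_words; apply/idP/andP => [/mem_motzkin_paths[-> ->] |].
    by rewrite !eqxx.
  by case=> /eqP ? /eqP ?; apply/mem_motzkin_paths.
Qed.

Lemma size_no_young_leaf_trees m : size (no_young_leaf_trees m) = motzkin m.
Proof. by rewrite -size_motzkin_paths; apply: size_motzkin_gen. Qed.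

Theorem mainTheorem5 (n : nat) (hn : 1 <= n) :
  card_is (fun t => edges t = n /\ old_leaves t = 1) (2 ^ n.-1)
  /\ card_is (fun t => edges t = n /\ young_leaves t = 0) (motzkin n.-1).
Proof.
case: n hn => // m _; split.
- rewrite -size_one_old_leaf_trees.
  apply: card_is_uniq => [|t]; first exact: one_old_leaf_trees_uniq.
  rewrite mem_one_old_leaf_trees.
  by split=> [/andP[/eqP-> /eqP->] | [-> ->]] //; rewrite !eqxx.
- rewrite -size_no_young_leaf_trees.
  apply: card_is_uniq; [exact: no_young_leaf_trees_uniq | exact: mem_no_young_leaf_trees].
Qed.
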